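(* Let $X$ be a $d$-dimensional simplicial complex and let $c$ be a proper coloring of the vertices of $X$ such that no two $(d-1)$-dimensional faces of $X$ have the same pattern. Then $H_{d-1}(X)_T \cong H_{d-1}((X,c))_T$.
   Context: Homology has integer coefficients; $A_T$ denotes the torsion subgroup of an abelian group $A$. A coloring $c$ of $V(X)$ is proper if no two vertices joined by an edge of $X$ receive the same color. The pattern of a face is the multiset of colors of its vertices. For a proper coloring $c$, the pattern complex $(X,c)$ is the simplicial complex on the set of colors of $c$ in which a set $S$ of colors is a face if and only if $S$ is the pattern of some face of $X$. *)

From HB Require Import structures.
From mathcomp Require Import all_boot all_order all_algebra.
Set Implicit Arguments. Unset Strict Implicit. Unset Printing Implicit Defensive.
Import GRing.Theory Num.Theory.
Local Open Scope ring_scope.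

Definition is_complex (V : finType) (X : {set {set V}}) : Prop :=
  forall s t : {set V}, s \in X -> t \subset s -> t \in X.

Definition has_dim (V : finType) (X : {set {set V}}) (d : nat) : Prop :=
  (exists2 s, s \in X & #|s| = d.+1) /\ (forall s, s \in X -> (#|s| <= d.+1)%N).

Definition proper_coloring (V C : finType) (X : {set {set V}}) (c : V -> C) : Prop :=
  forall u v : V, u != v -> [set u; v] \in X -> c u != c v.

(* Pattern of a face (c is proper, so the multiset of colors is a set). *)
Definition pattern (V C : finType) (c : V -> C) (s : {set V}) : {set C} := c @: s.

Definition pattern_complex (V C : finType) (X : {set {set V}}) (c : V -> C)
  : {set {set C}} := [set pattern c s | s in X].

(* Faces are oriented by the canonical order of the finType V (enum_rank). *)
Definition chains (V : finType) := {ffun {set V} -> int}.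

Definition pos (V : finType) (v : V) (s : {set V}) : nat :=
  #|[set u in s | (enum_rank u < enum_rank v)%N]|.

(* Simplicial boundary; the (-1)-chains are ignored (non-reduced homology). *)
Definition bdry (V : finType) (x : chains V) : chains V :=
  [ffun t : {set V} => if t == set0 then 0
     else \sum_(v | v \notin t) (-1) ^+ pos v (v |: t) * x (v |: t)].

Definition is_chain (V : finType) (X : {set {set V}}) (k : nat) (x : chains V) : Prop :=
  forall s, x s != 0 -> (s \in X) && (#|s| == k.+1).

Definition is_cycle (V : finType) (X : {set {set V}}) (k : nat) (x : chains V) : Prop :=
  is_chain X k x /\ bdry x = 0.

Definition is_boundary (V : finType) (X : {set {set V}}) (k : nat) (x : chains V) : Prop :=
  exists2 e, is_chain X k.+1 e & bdry e = x.

(* Cycles representing torsion classes of H_k(X): some positive multiple is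
   a boundary.  The torsion subgroup H_k(X)_T is the quotient of these cycles
   by the boundaries. *)
Definition is_tors_cycle (V : finType) (X : {set {set V}}) (k : nat) (x : chains V) : Prop :=
  is_cycle X k x /\ exists2 n : nat, (0 < n)%N & is_boundary X k (x *+ n).

(* H_k(X)_T ≅ H_k(Y)_T : a group isomorphism between the quotients
   {torsion cycles}/{boundaries}, presented through an additive lift f on
   chains: f maps torsion cycles to torsion cycles, the induced map on
   classes is well defined and injective (f z is a boundary iff z is), and
   surjective. *)
Definition tors_homology_iso (V W : finType) (X : {set {set V}}) (Y : {set {set W}})
  (k : nat) : Prop :=
  exists f : chains V -> chains W,
    [/\ forall x y, f (x + y) = f x + f y,
        forall z, is_tors_cycle X k z -> is_tors_cycle Y k (f z),
        forall z, is_tors_cycle X k z -> (is_boundary Y k (f z) <-> is_boundary X k z)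
      & forall w, is_tors_cycle Y k w ->
          exists2 z, is_tors_cycle X k z & is_boundary Y k (f z - w)].

From HB Require Import structures.
From mathcomp Require Import all_boot all_order all_algebra.
Set Implicit Arguments. Unset Strict Implicit. Unset Printing Implicit Defensive.
Import GRing.Theory Num.Theory.
Local Open Scope ring_scope.

(* The colouring induces a chain map from X to (X,c): a face s goes to its
   pattern c(s), with the sign of the permutation that reorders the vertices of
   s by colour (c is injective on faces because it is proper).  Since distinct
   (d-1)-faces have distinct patterns, this map is injective on (d-1)-chains,
   and every chain of (X,c) has a preimage obtained by choosing one face above
   each pattern; hence it maps the (d-1)-boundaries of X onto those of (X,c).
   A lifted torsion cycle w is again a cycle because some multiple n*w is a
   boundary and chains are torsion-free.  This is where torsion matters: the map
   need not be injective on (d-2)-chains, so a general cycle of (X,c) need not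
   lift to a cycle of X. *)

Local Notation "u <# v" := (enum_rank u < enum_rank v)%N (at level 70, no associativity).

Lemma enum_rank_gtNlt (T : finType) (x y : T) : x != y -> (y <# x) = ~~ (x <# y).
Proof.
by move=> xy; rewrite ltnNge leq_eqVlt (inj_eq val_inj) (inj_eq enum_rank_inj) (negbTE xy).
Qed.

Lemma partition_big_dep (R : Type) (idx : R) (op : Monoid.com_law idx)
    (I J : finType) (h : I -> J) (P : pred I) (Q : pred J) (F : J -> I -> R) :
  (forall i, P i -> Q (h i)) ->
  \big[op/idx]_(j | Q j) \big[op/idx]_(i | P i && (h i == j)) F j i
    = \big[op/idx]_(i | P i) F (h i) i.
Proof.
move=> PQ; rewrite [RHS](partition_big h Q) //.
by apply: eq_bigr => j _; apply: eq_bigr => i /andP[_ /eqP ->].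
Qed.

Lemma imsetD1_in (aT rT : finType) (f : aT -> rT) (s : {set aT}) (v : aT) :
  {in s &, injective f} -> v \in s -> f @: (s :\ v) = (f @: s) :\ f v.
Proof.
move=> injf vs; apply/setP => z; rewrite !inE.
apply/imsetP/andP => [[u /setD1P[uv us] ->] | [zv /imsetP[u us zu]]].
  by split; [apply: contra uv => /eqP/(injf _ _ us vs)/eqP | exact: imset_f].
exists u; rewrite // !inE us andbT.
by move: zv; rewrite zu; apply: contra_neq => ->.
Qed.

Section Boundary.

Variable V : finType.
Implicit Types (x : chains V) (s t : {set V}) (u v : V).

Lemma posE v s : pos v s = (\sum_(u in s) (u <# v))%N.
Proof.
rewrite /pos -sum1dep_card big_mkcondr /=.
by apply: eq_bigr => u _; case: (u <# v).
Qed.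

Lemma posU1 u v t : u \notin t -> v \notin t -> u != v ->
  pos u (u |: (v |: t)) = (pos u (u |: t) + (v <# u))%N.
Proof.
move=> ut vt uv; have uvt : u \notin v |: t by rewrite !inE negb_or uv.
by rewrite !posE (big_setU1 _ uvt) (big_setU1 _ ut) (big_setU1 _ vt) /= ltnn !add0n addnC.
Qed.

Lemma pos_swap u v t : u \notin t -> v \notin t -> u != v ->
  (-1) ^+ (pos v (v |: t) + pos u (u |: (v |: t))) =
  - (-1) ^+ (pos u (u |: t) + pos v (v |: (u |: t))) :> int.
Proof.
move=> ut vt uv; rewrite (posU1 ut vt uv) (posU1 vt ut) 1?eq_sym //.
rewrite (enum_rank_gtNlt uv) !exprD mulrCA.
by case: (u <# v); rewrite /= ?expr0 ?expr1 ?mulr1 ?mulrN1 mulrN ?opprK.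
Qed.

Lemma bdry_is_zmod_morphism : zmod_morphism (@bdry V).
Proof.
move=> x y; apply/ffunP => t; rewrite !ffunE; case: ifP => _; first by rewrite subr0.
by rewrite -sumrB; apply: eq_bigr => v _; rewrite !ffunE mulrBr.
Qed.

End Boundary.

HB.instance Definition _ (V : finType) :=
  GRing.isZmodMorphism.Build (chains V) (chains V) (@bdry V) (@bdry_is_zmod_morphism V).

Section Chains.

Variable V : finType.
Implicit Types (X : {set {set V}}) (x : chains V) (s t : {set V}) (u v : V).

Lemma bdry_bdry x : bdry (bdry x) = 0.
Proof.
apply/ffunP => t; rewrite !ffunE; case: eqP => // _.
pose F v u : int := if [&& v \notin t, u \notin t & u != v]
  then (-1) ^+ (pos v (v |: t) + pos u (u |: (v |: t))) * x (u |: (v |: t)) else 0.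
have -> : \sum_(v | v \notin t) (-1) ^+ pos v (v |: t) * bdry x (v |: t)
          = \sum_v \sum_u F v u.
  rewrite big_mkcond; apply: eq_bigr => v _; rewrite ffunE /F /=.
  have -> : (v |: t == set0) = false by apply/negbTE/set0Pn; exists v; rewrite setU11.
  case: (v \notin t); last by rewrite big1.
  rewrite mulr_sumr big_mkcond; apply: eq_bigr => u _.
  by rewrite !inE negb_or andbC /= mulrA -exprD.
have F_anti u v : F u v = - F v u.
  rewrite /F; have [<-|vu] := eqVneq v u; first by rewrite !andbF oppr0.
  rewrite !andbT andbC.
  case: (boolP (v \notin t)) => vt; case: (boolP (u \notin t)) => ut //=; rewrite ?oppr0 //.
  by rewrite pos_swap ?mulNr 1?setUCA // eq_sym.
set S := \sum_v \sum_u F v u.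
have /eqP : S = - S.
  rewrite {1}/S exchange_big -sumrN; apply: eq_bigr => u _.
  by rewrite -sumrN; apply: eq_bigr => v _.
by rewrite -addr_eq0 -mulr2n mulrn_eq0 => /eqP.
Qed.

Lemma bdry_faceE x t : t != set0 ->
  bdry x t = \sum_(s : {set V}) \sum_(v in s | s :\ v == t) (-1) ^+ pos v s * x s.
Proof.
move=> t0; rewrite ffunE (negbTE t0) (exchange_big_dep (fun v => v \notin t)) /=.
  apply: eq_bigr => v vt; rewrite (big_pred1 (v |: t)) // => s /=.
  apply/andP/eqP => [[vs /eqP <-] | ->]; first by rewrite setD1K.
  by rewrite setU11 setU1K.
by move=> s v _ /andP[_ /eqP <-]; rewrite setD11.
Qed.

Lemma chain_support X k x : is_chain X k x -> forall s, x s != 0 -> s \in X.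
Proof. by move=> xX s /xX /andP[]. Qed.

Lemma chainMn X k x n : is_chain X k x -> is_chain X k (x *+ n).
Proof.
move=> xX s; rewrite ffunMnE => xns; apply: xX.
by apply: contraNneq xns => ->; rewrite mul0rn.
Qed.

Lemma bdry_chain X k x : is_complex X -> is_chain X k.+1 x -> is_chain X k (bdry x).
Proof.
move=> X_complex xX t; apply: contraR => tX; rewrite ffunE; case: ifP => // _.
rewrite big1 // => v vt; apply/eqP; rewrite mulf_eq0; apply/orP; right.
apply: contraR tX => /xX /andP[vtX]; rewrite cardsU1 vt add1n eqSS => ->.
by rewrite (X_complex _ _ vtX) ?subsetUr.
Qed.

Lemma boundary0 X k : is_boundary X k 0.
Proof. by exists 0; rewrite ?raddf0 // => s; rewrite ffunE eqxx. Qed.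

Lemma chainMn_eq0 x n : (x *+ n == 0) = (n == 0%N) || (x == 0).
Proof.
have [->|n0] := eqVneq n 0%N; first by rewrite mulr0n eqxx.
apply/eqP/eqP => [/ffunP xn|->]; last by rewrite mul0rn.
apply/ffunP => s; have /eqP := xn s.
by rewrite ffunMnE !ffunE mulrn_eq0 (negbTE n0) => /eqP.
Qed.

Lemma boundaryMn_tors_cycle X k z n : is_chain X k z -> (0 < n)%N ->
  is_boundary X k (z *+ n) -> is_tors_cycle X k z.
Proof.
move=> zX n0 [e eX ez]; split; last by exists n => //; exists e.
split=> //; apply/eqP; have /eqP := congr1 (@bdry V) ez.
by rewrite bdry_bdry raddfMn eq_sym chainMn_eq0 eqn0Ngt n0.
Qed.

End Chains.

Section ColorSign.

Variables (V C : finType) (c : V -> C).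
Implicit Types (s t : {set V}) (u v : V).

Definition inversions s : nat :=
  (\sum_(a in s) \sum_(b in s) ((a <# b) && (c b <# c a)))%N.

(* The sign of the permutation sorting the vertices of s by colour instead of by
   their rank in V. *)
Definition color_sign s : int := (-1) ^+ inversions s.

Lemma inversionsU1 v t : v \notin t ->
  inversions (v |: t) = (inversions t +
    \sum_(u in t) (((u <# v) && (c v <# c u)) + ((v <# u) && (c u <# c v))))%N.
Proof.
move=> vt; rewrite /inversions.
under eq_bigr => a _ do rewrite (big_setU1 _ vt) /=.
rewrite (big_setU1 _ vt) /= ltnn add0n !big_split /=.
by rewrite addnA addnC; congr (_ + _); exact: addnC.
Qed.

Lemma odd_inversionsU1 v t : v \notin t -> {in v |: t &, injective c} ->
  odd (inversions (v |: t) + pos (c v) (c @: (v |: t))) =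
  odd (inversions t + pos v (v |: t)).
Proof.
move=> vt injc; rewrite inversionsU1 // !posE big_imset //= !big_setU1 //= !ltnn !add0n.
have cmp u : u \in t -> (((u <# v) && (c v <# c u)) + ((v <# u) && (c u <# c v))
    + (c u <# c v) = (u <# v) + ((v <# u) && (c u <# c v)) * 2)%N.
  move=> ut; have uv : u != v by apply: contraNneq vt => <-.
  have cuv : c u != c v.
    by apply: contra uv => /eqP/(injc _ _ (setU1r v ut) (setU11 v t))/eqP.
  rewrite (enum_rank_gtNlt uv) (enum_rank_gtNlt cuv).
  by case: (u <# v); case: (c u <# c v).
rewrite -addnA -big_split /= (eq_bigr _ cmp) big_split /= -big_distrl /= addnA.
by rewrite oddD oddM andbF addbF.
Qed.

Lemma color_signD1 v s : v \in s -> {in s &, injective c} ->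
  (-1) ^+ pos (c v) (c @: s) * color_sign s = color_sign (s :\ v) * (-1) ^+ pos v s.
Proof.
move=> vs injc; have := @odd_inversionsU1 v (s :\ v); rewrite setD11 setD1K //.
by move=> /(_ isT injc) par; rewrite /color_sign -!exprD addnC -signr_odd par signr_odd.
Qed.

Lemma color_sign_bdry s p : {in s &, injective c} ->
  \sum_(g in c @: s | (c @: s) :\ g == p) (-1) ^+ pos g (c @: s) * color_sign s =
  \sum_(v in s | c @: (s :\ v) == p) color_sign (s :\ v) * (-1) ^+ pos v s.
Proof.
move=> injc; rewrite !big_mkcondr big_imset //=; apply: eq_bigr => v vs.
by rewrite -(imsetD1_in injc vs) color_signD1.
Qed.

End ColorSign.

Definition pattern_map (V C : finType) (X : {set {set V}}) (c : V -> C)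
    (x : chains V) : chains C :=
  [ffun p : {set C} => \sum_(s in X | c @: s == p) color_sign c s * x s].

Lemma pattern_map_is_zmod_morphism (V C : finType) (X : {set {set V}}) (c : V -> C) :
  zmod_morphism (pattern_map X c).
Proof.
move=> x y; apply/ffunP => p; rewrite !ffunE -sumrB.
by apply: eq_bigr => s _; rewrite !ffunE mulrBr.
Qed.

HB.instance Definition _ (V C : finType) (X : {set {set V}}) (c : V -> C) :=
  GRing.isZmodMorphism.Build (chains V) (chains C) (pattern_map X c)
    (pattern_map_is_zmod_morphism X c).

Definition pattern_rep (V C : finType) (X : {set {set V}}) (c : V -> C) (p : {set C}) :=
  [pick s in X | c @: s == p].

Definition pattern_lift (V C : finType) (X : {set {set V}}) (c : V -> C)
    (w : chains C) : chains V :=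
  [ffun s : {set V} =>
     if pattern_rep X c (c @: s) == Some s then color_sign c s * w (c @: s) else 0].

Section PatternMap.

Variables (V C : finType) (X : {set {set V}}) (c : V -> C).
Hypotheses (X_complex : is_complex X) (c_proper : proper_coloring X c).
Implicit Types (x : chains V) (w : chains C) (s t : {set V}) (p : {set C}).

Local Notation Y := (pattern_complex X c).
Local Notation f := (pattern_map X c).
Local Notation lift := (pattern_lift X c).

Lemma proper_coloring_inj s : s \in X -> {in s &, injective c}.
Proof.
move=> sX u v us vs cuv; apply/eqP; apply: contraT => uv.
have /(c_proper uv) : [set u; v] \in X.
  by apply: X_complex sX _; apply/subsetP => w; rewrite !inE => /orP[]/eqP->.
by rewrite cuv eqxx.
Qed.

Lemma pattern_map_bdry_facets x p : (forall s, x s != 0 -> s \in X) -> p != set0 ->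
  f (bdry x) p = \sum_(s in X) \sum_(v in s | c @: (s :\ v) == p)
                   color_sign c (s :\ v) * (-1) ^+ pos v s * x s.
Proof.
move=> xX p0; rewrite ffunE.
transitivity (\sum_(s : {set V}) \sum_(t in X | c @: t == p) \sum_(v in s | s :\ v == t)
                color_sign c t * (-1) ^+ pos v s * x s).
  rewrite exchange_big; apply: eq_bigr => t /andP[_ /eqP ct].
  rewrite bdry_faceE ?mulr_sumr; last by apply: contraNneq p0 => t0; rewrite -ct t0 imset0.
  by apply: eq_bigr => s _; rewrite mulr_sumr; apply: eq_bigr => v _; rewrite mulrA.
rewrite [RHS]big_mkcond; apply: eq_bigr => s _ /=.
have [sX|sNX] := boolP (s \in X); last first.
  have xs0 : x s = 0 by apply/eqP; apply: contraNT sNX; exact: xX.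
  by rewrite !big1 // => t _; rewrite big1 // => v _; rewrite xs0 !mulr0.
rewrite -(@partition_big_dep _ _ _ _ _ (fun v => s :\ v) _
           (fun t => (t \in X) && (c @: t == p))
           (fun t v => color_sign c t * (-1) ^+ pos v s * x s)) /=; last first.
  by move=> v /andP[_ ->]; rewrite andbT (X_complex sX) ?subD1set.
apply: eq_bigr => t /andP[_ /eqP ct]; apply: eq_bigl => v.
by case: eqP => [->|]; rewrite ?ct ?eqxx ?andbT ?andbF.
Qed.

Lemma bdry_pattern_map_facets x p : p != set0 ->
  bdry (f x) p = \sum_(s in X) \sum_(v in s | c @: (s :\ v) == p)
                   color_sign c (s :\ v) * (-1) ^+ pos v s * x s.
Proof.
move=> p0; rewrite bdry_faceE //.
transitivity (\sum_(s in X) \sum_(g in c @: s | (c @: s) :\ g == p)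
                (-1) ^+ pos g (c @: s) * (color_sign c s * x s)); last first.
  apply: eq_bigr => s sX; rewrite -[RHS]big_distrl /=.
  rewrite -(color_sign_bdry _ (proper_coloring_inj sX)) big_distrl.
  by apply: eq_bigr => g _; rewrite mulrA.
rewrite -(@partition_big_dep _ _ _ _ _ (fun s => c @: s) _ predT (fun q s =>
   \sum_(g in q | q :\ g == p) (-1) ^+ pos g q * (color_sign c s * x s))) //.
apply: eq_bigr => q _; rewrite ffunE exchange_big /=; apply: eq_bigr => g _.
by rewrite mulr_sumr.
Qed.

Lemma pattern_map_bdry x : (forall s, x s != 0 -> s \in X) -> f (bdry x) = bdry (f x).
Proof.
move=> xX; apply/ffunP => p; have [->|p0] := eqVneq p set0; last first.
  by rewrite pattern_map_bdry_facets ?bdry_pattern_map_facets.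
rewrite !ffunE eqxx big1 // => t /andP[_]; rewrite imset_eq0 => /eqP ->.
by rewrite ffunE eqxx mulr0.
Qed.

Lemma pattern_map_chain k x : is_chain X k x -> is_chain Y k (f x).
Proof.
move=> xX p; rewrite ffunE; apply: contraR => pY.
rewrite big1 // => s /andP[sX /eqP cs]; apply/eqP; rewrite mulf_eq0; apply/orP; right.
apply: contraR pY => /xX /andP[_ /eqP ks].
have sY : c @: s \in Y := imset_f (pattern c) sX.
by rewrite -cs sY card_in_imset ?ks ?eqxx //; exact: proper_coloring_inj.
Qed.

Lemma pattern_map_boundary k z : is_boundary X k z -> is_boundary Y k (f z).
Proof.
move=> [e eX <-]; exists (f e); first exact: pattern_map_chain eX.
by rewrite (pattern_map_bdry (chain_support eX)).
Qed.

Lemma pattern_rep_some p s : pattern_rep X c p = Some s -> s \in X /\ c @: s = p.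
Proof. by rewrite /pattern_rep; case: pickP => // s' /andP[s'X /eqP <-] [<-]. Qed.

Lemma pattern_rep_none p : pattern_rep X c p = None -> p \notin Y.
Proof.
rewrite /pattern_rep; case: pickP => // none _; apply/imsetP => -[s sX ps].
by have := none s; rewrite sX ps eqxx.
Qed.

Lemma pattern_lift_chain k w : is_chain Y k w -> is_chain X k (lift w).
Proof.
move=> wY s; rewrite ffunE; case: ifP => [/eqP rep|_]; last by rewrite eqxx.
have [sX _] := pattern_rep_some rep.
rewrite mulf_eq0 negb_or => /andP[_ /wY /andP[_ /eqP <-]].
by rewrite sX card_in_imset ?eqxx //; exact: proper_coloring_inj.
Qed.

Lemma pattern_map_lift k w : is_chain Y k w -> f (lift w) = w.
Proof.
move=> wY; apply/ffunP => p; rewrite ffunE.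
case rep: (pattern_rep X c p) => [s|].
  have [sX cs] := pattern_rep_some rep.
  rewrite (bigD1 s) ?sX ?cs ?eqxx //= big1 ?addr0.
    by rewrite ffunE cs rep eqxx signrMK.
  move=> t /andP[/andP[_ /eqP ct] ts].
  by rewrite ffunE ct rep (inj_eq Some_inj) eq_sym (negbTE ts) mulr0.
have -> : w p = 0 by apply/eqP; apply: contraR (pattern_rep_none rep) => /wY /andP[].
rewrite big1 // => s /andP[sX /eqP cs]; have := pattern_rep_none rep.
by rewrite -cs (imset_f (pattern c) sX).
Qed.

Section DistinctRidgePatterns.

Variable k : nat.
Hypothesis ridge_patterns_inj : forall s t, s \in X -> t \in X ->
  #|s| = k.+1 -> #|t| = k.+1 -> pattern c s = pattern c t -> s = t.

Lemma pattern_map_ridge x s : is_chain X k x -> s \in X -> #|s| = k.+1 ->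
  f x (c @: s) = color_sign c s * x s.
Proof.
move=> xX sX ks; rewrite ffunE (bigD1 s) ?sX ?eqxx //= big1 ?addr0 //.
move=> t /andP[/andP[tX /eqP cts] ts]; have [xt0|/xX /andP[_ /eqP kt]] := eqVneq (x t) 0.
  by rewrite xt0 mulr0.
by rewrite (ridge_patterns_inj tX sX kt ks cts) eqxx in ts.
Qed.

Lemma pattern_map_inj x y : is_chain X k x -> is_chain X k y -> f x = f y -> x = y.
Proof.
move=> xX yX fxy; apply/ffunP => s.
have [/andP[sX /eqP ks]|sNk] := boolP ((s \in X) && (#|s| == k.+1)).
  have := congr1 (fun z : chains C => z (c @: s)) fxy.
  by rewrite /= !pattern_map_ridge // => /(can_inj (signrMK _)).
have zero z : is_chain X k z -> z s = 0.
  by move=> zX; apply/eqP; apply: contraNT sNk; exact: zX.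
by rewrite !zero.
Qed.

Lemma pattern_map_boundary_iff z : is_chain X k z ->
  is_boundary Y k (f z) <-> is_boundary X k z.
Proof.
move=> zX; split; last exact: pattern_map_boundary.
move=> [e eY fz]; have eX := pattern_lift_chain eY.
exists (lift e) => //; apply: pattern_map_inj => //; first exact: bdry_chain eX.
by rewrite (pattern_map_bdry (chain_support eX)) (pattern_map_lift eY).
Qed.

Lemma pattern_lift_tors_cycle w : is_tors_cycle Y k w -> is_tors_cycle X k (lift w).
Proof.
move=> [[wY _] [n n0 [e eY fe]]]; have wX := pattern_lift_chain wY.
apply: (boundaryMn_tors_cycle wX n0); have eX := pattern_lift_chain eY.
exists (lift e) => //; apply: pattern_map_inj; first exact: bdry_chain eX.
  exact: chainMn.
rewrite (pattern_map_bdry (chain_support eX)).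
by rewrite (pattern_map_lift eY) fe raddfMn /= (pattern_map_lift wY).
Qed.

End DistinctRidgePatterns.

End PatternMap.

Theorem lemma2 (V C : finType) (X : {set {set V}}) (d : nat) (c : V -> C) :
  is_complex X -> has_dim X d -> (0 < d)%N ->
  proper_coloring X c ->
  (forall s t, s \in X -> t \in X -> #|s| = d -> #|t| = d ->
      pattern c s = pattern c t -> s = t) ->
  tors_homology_iso X (pattern_complex X c) d.-1.
Proof.
move=> X_complex _ d_gt0 c_proper; case: d d_gt0 => // k _ ridges /=.
exists (pattern_map X c); split.
- exact: raddfD.
- move=> z [[zX _] [n n0 zn]]; apply: boundaryMn_tors_cycle n0 _.
    exact: pattern_map_chain zX.
  by rewrite -raddfMn; exact: pattern_map_boundary zn.
- by move=> z [[zX _] _]; exact: pattern_map_boundary_iff.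
- move=> w wT; exists (pattern_lift X c w); first exact: pattern_lift_tors_cycle.
  by case: wT => -[wY _] _; rewrite (pattern_map_lift wY) subrr; exact: boundary0.
Qed.
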